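(* Let $M_1=(Q_1,R_1,X,\delta_1)$ and $M_2=(Q_2,R_2,X,\delta_2)$ be rough finite state machines with the same input set $X$. Then the restricted direct product $M_1\wedge M_2$ is covered by the full direct product $M_1\times M_2$, i.e. $M_1\wedge M_2\preceq M_1\times M_2$.
   Context: For a finite set $Q$ with an equivalence relation $R$ and $A\subseteq Q$, $\underline{A}$ is the union of the $R$-classes contained in $A$ and $\overline{A}$ is the union of the $R$-classes meeting $A$. A rough finite state machine (RFSM) is $M=(Q,R,X,\delta)$ with $Q$ a nonempty finite state set, $R$ an equivalence relation on $Q$, $X$ a nonempty finite input set, and $\delta$ assigning to each $(q,a)\in Q\times X$ a pair $\delta(q,a)=(\underline{\delta(q,a)},\overline{\delta(q,a)})=(\underline{A},\overline{A})$ for some $A\subseteq Q$. For equivalence relations $R_1,R_2$ on $Q_1,Q_2$, $R_1\times R_2$ is the equivalence relation on $Q_1\times Q_2$ with $((p_1,p_2),(q_1,q_2))\in R_1\times R_2$ iff $(p_1,q_1)\in R_1$ and $(p_2,q_2)\in R_2$. Full direct product: for RFSMs $M_i=(Q_i,R_i,X_i,\delta_i)$, $M_1\times M_2=(Q_1\times Q_2,R_1\times R_2,X_1\times X_2,\delta_1\times\delta_2)$ where the lower part of $(\delta_1\times\delta_2)((q_1,q_2),(x_1,x_2))$ is $\underline{\delta_1(q_1,x_1)}\times\underline{\delta_2(q_2,x_2)}$ and the upper part is $\overline{\delta_1(q_1,x_1)}\times\overline{\delta_2(q_2,x_2)}$. Restricted direct product (when $X_1=X_2=X$): $M_1\wedge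 M_2=(Q_1\times Q_2,R_1\times R_2,X,\delta_1\wedge\delta_2)$ with lower part $\underline{\delta_1(q_1,x)}\times\underline{\delta_2(q_2,x)}$ and upper part $\overline{\delta_1(q_1,x)}\times\overline{\delta_2(q_2,x)}$ of $(\delta_1\wedge\delta_2)((q_1,q_2),x)$. Covering: for RFSMs $N_1=(P_1,S_1,Y_1,\mu_1)$ and $N_2=(P_2,S_2,Y_2,\mu_2)$, a covering of $N_1$ by $N_2$ is a pair $(\eta,\xi)$ with $\eta:P_2\to P_1$ surjective and $\xi:Y_1\to Y_2$ a map (extended to words by $\xi(e)=e$, $\xi(y_1\cdots y_n)=\xi(y_1)\cdots\xi(y_n)$) such that (i) $(p,q)\in S_2\Rightarrow(\eta(p),\eta(q))\in S_1$ for all $p,q\in P_2$, and (ii) for all $p\in P_2$ and $y\in Y_1$: $\underline{\mu_1(\eta(p),y)}\subseteq\eta(\underline{\mu_2(p,\xi(y))})$ and $\overline{\mu_1(\eta(p),y)}\subseteq\eta(\overline{\mu_2(p,\xi(y))})$ (images of sets under $\eta$). One writes $N_1\preceq N_2$ if such a covering exists. *)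

From mathcomp Require Import all_boot.
Set Implicit Arguments. Unset Strict Implicit. Unset Printing Implicit Defensive.

Section Rough.
Variable Q : finType.
Variable R : rel Q.

Definition rclass (x : Q) : {set Q} := [set y | R x y].

Definition lower (A : {set Q}) : {set Q} :=
  [set x | rclass x \subset A].

Definition upper (A : {set Q}) : {set Q} :=
  [set x | [exists y, (y \in rclass x) && (y \in A)]].
End Rough.

Record RFSM (Q X : finType) := MkRFSM {
  rR : rel Q;
  rR_equiv : equivalence_rel rR;
  rQ_nonempty : 0 < #|Q|;
  rX_nonempty : 0 < #|X|;
  rdelta : Q -> X -> {set Q} * {set Q};
  rdelta_rough : forall q a, exists A : {set Q},
      rdelta q a = (lower rR A, upper rR A)
}.

Definition prod_rel (Q1 Q2 : finType) (R1 : rel Q1) (R2 : rel Q2)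
  : rel (Q1 * Q2) :=
  fun p q => R1 p.1 q.1 && R2 p.2 q.2.

Definition full_delta (Q1 Q2 X1 X2 : finType)
  (M1 : RFSM Q1 X1) (M2 : RFSM Q2 X2)
  (q : Q1 * Q2) (x : X1 * X2) : {set Q1 * Q2} * {set Q1 * Q2} :=
  (setX (rdelta M1 q.1 x.1).1 (rdelta M2 q.2 x.2).1,
   setX (rdelta M1 q.1 x.1).2 (rdelta M2 q.2 x.2).2).

Definition restr_delta (Q1 Q2 X : finType)
  (M1 : RFSM Q1 X) (M2 : RFSM Q2 X)
  (q : Q1 * Q2) (x : X) : {set Q1 * Q2} * {set Q1 * Q2} :=
  (setX (rdelta M1 q.1 x).1 (rdelta M2 q.2 x).1,
   setX (rdelta M1 q.1 x).2 (rdelta M2 q.2 x).2).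

(* A covering of N1 = (P1,S1,Y1,mu1) by N2 = (P2,S2,Y2,mu2), stated on the
   underlying data (relations and transition maps). *)
Definition covering (P1 Y1 P2 Y2 : finType)
  (S1 : rel P1) (mu1 : P1 -> Y1 -> {set P1} * {set P1})
  (S2 : rel P2) (mu2 : P2 -> Y2 -> {set P2} * {set P2})
  (eta : P2 -> P1) (xi : Y1 -> Y2) : Prop :=
  (forall p1 : P1, exists p2 : P2, eta p2 = p1) /\
  (forall p q : P2, S2 p q -> S1 (eta p) (eta q)) /\
  (forall (p : P2) (y : Y1),
     (mu1 (eta p) y).1 \subset eta @: (mu2 p (xi y)).1 /\
     (mu1 (eta p) y).2 \subset eta @: (mu2 p (xi y)).2).

Definition covered_by (P1 Y1 P2 Y2 : finType)
  (S1 : rel P1) (mu1 : P1 -> Y1 -> {set P1} * {set P1})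
  (S2 : rel P2) (mu2 : P2 -> Y2 -> {set P2} * {set P2}) : Prop :=
  exists (eta : P2 -> P1) (xi : Y1 -> Y2), covering S1 mu1 S2 mu2 eta xi.

From mathcomp Require Import all_boot.

(* The restricted product is the full product fed only diagonal inputs (x, x),
   so the identity on states together with the diagonal input map is a covering. *)

Lemma restr_deltaE (Q1 Q2 X : finType) (M1 : RFSM Q1 X) (M2 : RFSM Q2 X)
    (q : Q1 * Q2) (x : X) :
  restr_delta M1 M2 q x = full_delta M1 M2 q (x, x).
Proof. by []. Qed.

Lemma covering_id (P Y1 Y2 : finType) (S : rel P)
    (mu1 : P -> Y1 -> {set P} * {set P}) (mu2 : P -> Y2 -> {set P} * {set P})
    (xi : Y1 -> Y2) :
  (forall p y, mu1 p y = mu2 p (xi y)) -> covering S mu1 S mu2 id xi.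
Proof.
move=> mu12; split; first by move=> p; exists p.
split=> // p y; rewrite !imset_id mu12.
by split; apply: subxx.
Qed.

Theorem proposition3p1 (Q1 Q2 X : finType) (M1 : RFSM Q1 X) (M2 : RFSM Q2 X) :
  covered_by
    (prod_rel (rR M1) (rR M2)) (restr_delta M1 M2)
    (prod_rel (rR M1) (rR M2)) (@full_delta Q1 Q2 X X M1 M2).
Proof.
exists id, (fun x => (x, x)).
by apply: covering_id => q x; rewrite restr_deltaE.
Qed.
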